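(* Let $\lambda_1,\lambda_2,\lambda_3,\lambda_4>0$ and $\alpha>0$. For a decomposition $\bm{X}=\sum_{d=1}^{D/P}\bm{W}\times_1\bm{H}_{:d:}\times_2\bm{R}_{:d:}\times_3\bm{T}_{:d:}$ define $$A=\sum_{d=1}^{D/P}\Big[\lambda_1\big(\|\bm{H}_{:d:}\|_F^{\alpha}+\|\bm{R}_{:d:}\|_F^{\alpha}+\|\bm{T}_{:d:}\|_F^{\alpha}\big)+\lambda_4\big(\|\bm{W}\times_2\bm{R}_{:d:}\times_3\bm{T}_{:d:}\|_F^{\alpha}+\|\bm{W}\times_3\bm{T}_{:d:}\times_1\bm{H}_{:d:}\|_F^{\alpha}+\|\bm{W}\times_1\bm{H}_{:d:}\times_2\bm{R}_{:d:}\|_F^{\alpha}\big)\Big],$$ $$B=\sum_{d=1}^{D/P}\Big[\lambda_2\big(\|\bm{T}_{:d:}\|_F^{\alpha}\|\bm{R}_{:d:}\|_F^{\alpha}+\|\bm{T}_{:d:}\|_F^{\alpha}\|\bm{H}_{:d:}\|_F^{\alpha}+\|\bm{R}_{:d:}\|_F^{\alpha}\|\bm{H}_{:d:}\|_F^{\alpha}\big)+\lambda_3\big(\|\bm{W}\times_1\bm{H}_{:d:}\|_F^{\alpha}+\|\bm{W}\times_2\bm{R}_{:d:}\|_F^{\alpha}+\|\bm{W}\times_3\bm{T}_{:d:}\|_F^{\alpha}\big)\Big].$$ Then: (i) for any tensor $\bm{X}\in\mathbb{R}^{n_1\times n_2\times n_3}$ there exists a decomposition of $\bm{X}$ of this form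 for which $A<\frac{\sqrt{\lambda_1\lambda_4}}{\sqrt{\lambda_2\lambda_3}}B$; and (ii) for some tensor $\bm{X}$ there exists a decomposition of $\bm{X}$ of this form for which $A>\frac{\sqrt{\lambda_1\lambda_4}}{\sqrt{\lambda_2\lambda_3}}B$.
   Context: A decomposition of $\bm{X}\in\mathbb{R}^{n_1\times n_2\times n_3}$ consists of positive integers $P,D$ with $P\mid D$, a core $\bm{W}\in\mathbb{R}^{P\times P\times P}$, and arrays $\bm{H}\in\mathbb{R}^{n_1\times (D/P)\times P}$, $\bm{R}\in\mathbb{R}^{n_2\times (D/P)\times P}$, $\bm{T}\in\mathbb{R}^{n_3\times (D/P)\times P}$ with $\bm{X}=\sum_{d=1}^{D/P}\bm{W}\times_1\bm{H}_{:d:}\times_2\bm{R}_{:d:}\times_3\bm{T}_{:d:}$, where $\bm{H}_{:d:}\in\mathbb{R}^{n_1\times P}$ is the slice with middle index $d$ and $(\bm{W}\times_1\bm{A})_{imn}=\sum_l\bm{W}_{lmn}\bm{A}_{il}$ (with $\times_2,\times_3$ analogous). $\|\cdot\|_F$ is the Frobenius norm. *)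

From mathcomp Require Import all_boot all_order all_algebra.
From mathcomp Require Import all_classical all_reals all_analysis.
Set Implicit Arguments. Unset Strict Implicit. Unset Printing Implicit Defensive.
Import Order.TTheory GRing.Theory Num.Theory.
Local Open Scope ring_scope.

Section Tensors.
Variable R : realType.

Definition tensor3 (a b c : nat) := 'I_a -> 'I_b -> 'I_c -> R.
Definition mat (n p : nat) := 'I_n -> 'I_p -> R.

Definition fro3 a b c (X : tensor3 a b c) : R :=
  Num.sqrt (\sum_(i < a) \sum_(j < b) \sum_(k < c) X i j k ^+ 2).
Definition fro2 n p (M : mat n p) : R :=
  Num.sqrt (\sum_(i < n) \sum_(j < p) M i j ^+ 2).

Definition mode1 a b c n (W : tensor3 a b c) (A : mat n a) : tensor3 n b c :=
  fun i m k => \sum_(l < a) W l m k * A i l.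
Definition mode2 a b c n (W : tensor3 a b c) (A : mat n b) : tensor3 a n c :=
  fun l i k => \sum_(m < b) W l m k * A i m.
Definition mode3 a b c n (W : tensor3 a b c) (A : mat n c) : tensor3 a b n :=
  fun l m i => \sum_(k < c) W l m k * A i k.

Definition slice n K P (H : tensor3 n K P) (d : 'I_K) : mat n P :=
  fun i p => H i d p.

Definition is_decomp n1 n2 n3 (X : tensor3 n1 n2 n3) (P D : nat)
  (W : tensor3 P P P) (H : tensor3 n1 (D %/ P) P)
  (Rr : tensor3 n2 (D %/ P) P) (T : tensor3 n3 (D %/ P) P) : Prop :=
  [/\ (0 < P)%N, (0 < D)%N, (P %| D)%N &
    forall i j k, X i j k = \sum_(d < D %/ P)
      mode3 (mode2 (mode1 W (slice H d)) (slice Rr d)) (slice T d) i j k].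

Definition objA (l1 l4 al : R) n1 n2 n3 P K (W : tensor3 P P P)
  (H : tensor3 n1 K P) (Rr : tensor3 n2 K P) (T : tensor3 n3 K P) : R :=
  \sum_(d < K)
    (l1 * (fro2 (slice H d) `^ al + fro2 (slice Rr d) `^ al
           + fro2 (slice T d) `^ al)
     + l4 * (fro3 (mode3 (mode2 W (slice Rr d)) (slice T d)) `^ al
           + fro3 (mode1 (mode3 W (slice T d)) (slice H d)) `^ al
           + fro3 (mode2 (mode1 W (slice H d)) (slice Rr d)) `^ al)).

Definition objB (l2 l3 al : R) n1 n2 n3 P K (W : tensor3 P P P)
  (H : tensor3 n1 K P) (Rr : tensor3 n2 K P) (T : tensor3 n3 K P) : R :=
  \sum_(d < K)
    (l2 * (fro2 (slice T d) `^ al * fro2 (slice Rr d) `^ al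
           + fro2 (slice T d) `^ al * fro2 (slice H d) `^ al
           + fro2 (slice Rr d) `^ al * fro2 (slice H d) `^ al)
     + l3 * (fro3 (mode1 W (slice H d)) `^ al
           + fro3 (mode2 W (slice Rr d)) `^ al
           + fro3 (mode3 W (slice T d)) `^ al)).

End Tensors.

From mathcomp Require Import all_boot all_order all_algebra.
From mathcomp Require Import all_classical all_reals all_analysis.
From mathcomp Require Import zify ring lra.
Import Order.TTheory GRing.Theory Num.Theory.
Local Open Scope ring_scope.

(* (i) Every X is a single term with P = D large enough: the zero-padded X as
   core and partial identities as factors.  Multiplying the factors by t and
   the core by t^-3 leaves the term unchanged, makes the factor norms in A grow
   like t^al and the two-mode products in A shrink, while the products of factor
   norms in B grow like t^(2 al); so for t large, A < c B whatever c > 0 is.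
   (ii) For the zero tensor, a zero core with a single nonzero factor gives
   B = 0 < A. *)

Section Regularizers.
Variable R : realType.

Lemma tensor3_ext a b c (Y Z : tensor3 R a b c) :
  (forall i j k, Y i j k = Z i j k) -> Y = Z.
Proof. by move=> YZ; apply: funext => i; apply: funext => j; apply: funext => k. Qed.

Definition scale3 {a b c} (k : R) (Y : tensor3 R a b c) : tensor3 R a b c :=
  fun i j l => k * Y i j l.

Definition scale2 {n p} (k : R) (M : mat R n p) : mat R n p :=
  fun i j => k * M i j.

Lemma scale3A a b c (k k' : R) (Y : tensor3 R a b c) :
  scale3 k (scale3 k' Y) = scale3 (k * k') Y.
Proof. by apply: tensor3_ext => i j l; rewrite /scale3 mulrA. Qed.

Lemma scale31 a b c (Y : tensor3 R a b c) : scale3 1 Y = Y.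
Proof. by apply: tensor3_ext => i j l; rewrite /scale3 mul1r. Qed.

Section ModeScaling.
Variables (a b c n : nat) (k : R) (W : tensor3 R a b c).

Lemma mode1_scale3 (A : mat R n a) : mode1 (scale3 k W) A = scale3 k (mode1 W A).
Proof.
by apply: tensor3_ext => i j l; rewrite /mode1 /scale3 mulr_sumr;
  apply: eq_bigr => x _; rewrite mulrA.
Qed.

Lemma mode2_scale3 (A : mat R n b) : mode2 (scale3 k W) A = scale3 k (mode2 W A).
Proof.
by apply: tensor3_ext => i j l; rewrite /mode2 /scale3 mulr_sumr;
  apply: eq_bigr => x _; rewrite mulrA.
Qed.

Lemma mode3_scale3 (A : mat R n c) : mode3 (scale3 k W) A = scale3 k (mode3 W A).
Proof.
by apply: tensor3_ext => i j l; rewrite /mode3 /scale3 mulr_sumr;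
  apply: eq_bigr => x _; rewrite mulrA.
Qed.

Lemma mode1_scale2 (A : mat R n a) : mode1 W (scale2 k A) = scale3 k (mode1 W A).
Proof.
by apply: tensor3_ext => i j l; rewrite /mode1 /scale3 /scale2 mulr_sumr;
  apply: eq_bigr => x _; rewrite mulrCA.
Qed.

Lemma mode2_scale2 (A : mat R n b) : mode2 W (scale2 k A) = scale3 k (mode2 W A).
Proof.
by apply: tensor3_ext => i j l; rewrite /mode2 /scale3 /scale2 mulr_sumr;
  apply: eq_bigr => x _; rewrite mulrCA.
Qed.

Lemma mode3_scale2 (A : mat R n c) : mode3 W (scale2 k A) = scale3 k (mode3 W A).
Proof.
by apply: tensor3_ext => i j l; rewrite /mode3 /scale3 /scale2 mulr_sumr;
  apply: eq_bigr => x _; rewrite mulrCA.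
Qed.

End ModeScaling.

Definition mode_scaleE := (mode1_scale3, mode2_scale3, mode3_scale3,
  mode1_scale2, mode2_scale2, mode3_scale2, scale3A).

Lemma fro3_ge0 a b c (Y : tensor3 R a b c) : 0 <= fro3 Y.
Proof. exact: sqrtr_ge0. Qed.

Lemma fro2_ge0 n p (M : mat R n p) : 0 <= fro2 M.
Proof. exact: sqrtr_ge0. Qed.

Lemma fro3_scale3 a b c (k : R) (Y : tensor3 R a b c) :
  fro3 (scale3 k Y) = `|k| * fro3 Y.
Proof.
rewrite /fro3 /scale3 -sqrtr_sqr -sqrtrM ?sqr_ge0 // mulr_sumr.
congr Num.sqrt; apply: eq_bigr => i _; rewrite mulr_sumr; apply: eq_bigr => j _.
by rewrite mulr_sumr; apply: eq_bigr => l _; rewrite exprMn.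
Qed.

Lemma fro2_scale2 n p (k : R) (M : mat R n p) :
  fro2 (scale2 k M) = `|k| * fro2 M.
Proof.
rewrite /fro2 /scale2 -sqrtr_sqr -sqrtrM ?sqr_ge0 // mulr_sumr.
by congr Num.sqrt; apply: eq_bigr => i _; rewrite mulr_sumr; apply: eq_bigr => j _;
  rewrite exprMn.
Qed.

Lemma powR_fro3_scale3_le a b c (al k : R) (Y : tensor3 R a b c) :
  0 <= al -> 0 <= k <= 1 -> fro3 (scale3 k Y) `^ al <= fro3 Y `^ al.
Proof.
move=> al_ge0 /andP[k_ge0 k_le1]; rewrite fro3_scale3 ger0_norm //.
apply: ge0_ler_powR; rewrite ?nnegrE ?mulr_ge0 ?fro3_ge0 //.
by rewrite ler_piMl ?fro3_ge0.
Qed.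

Definition pid {n N : nat} : mat R n N := fun i l => (val i == val l)%:R.

Lemma sum_mul_pid {n N} (nN : (n <= N)%N) (f : 'I_N -> R) (i : 'I_n) :
  \sum_(l < N) f l * pid i l = f (widen_ord nN i).
Proof.
rewrite (bigD1 (widen_ord nN i)) //= /pid eqxx mulr1 big1 ?addr0 // => l li.
by rewrite eq_sym -[val i]/(val (widen_ord nN i)) (inj_eq val_inj) (negbTE li) mulr0.
Qed.

Lemma fro2_pid n N : (n <= N)%N -> fro2 (@pid n N) = Num.sqrt n%:R.
Proof.
move=> nN; rewrite /fro2; congr Num.sqrt.
rewrite -[n in RHS]card_ord -sumr_const; apply: eq_bigr => i _.
under eq_bigr do rewrite expr2.
by rewrite (sum_mul_pid nN) /pid eqxx.
Qed.

Definition pad3 {n1 n2 n3} (X : tensor3 R n1 n2 n3) (N : nat) : tensor3 R N N N :=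
  fun l m k => match insub (val l), insub (val m), insub (val k) with
               | Some i, Some j, Some c => X i j c
               | _, _, _ => 0
               end.

Lemma pad3_pid_modes n1 n2 n3 (X : tensor3 R n1 n2 n3) N :
  (n1 <= N)%N -> (n2 <= N)%N -> (n3 <= N)%N ->
  mode3 (mode2 (mode1 (pad3 X N) pid) pid) pid = X.
Proof.
move=> h1 h2 h3; apply: tensor3_ext => i j k.
rewrite /mode3 (sum_mul_pid h3) /mode2 (sum_mul_pid h2) /mode1 (sum_mul_pid h1).
by rewrite /pad3 /= !valK.
Qed.

(* Taking D = P gives a decomposition with a single slice. *)
Definition const_slices {n P} (A : mat R n P) : tensor3 R n (P %/ P) P :=
  fun i _ p => A i p.

Lemma sum_ord_divnn_const P (F : 'I_(P %/ P) -> R) (c : R) :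
  (0 < P)%N -> (forall d, F d = c) -> \sum_(d < P %/ P) F d = c.
Proof.
by move=> P_gt0 Fc; rewrite (eq_bigr _ (fun d _ => Fc d)) sumr_const card_ord divnn P_gt0.
Qed.

Lemma is_decomp_const_slices n1 n2 n3 P (X : tensor3 R n1 n2 n3)
    (W : tensor3 R P P P) (H : mat R n1 P) (Rr : mat R n2 P) (T : mat R n3 P) :
  (0 < P)%N -> mode3 (mode2 (mode1 W H) Rr) T = X ->
  is_decomp X W (const_slices H) (const_slices Rr) (const_slices T).
Proof.
move=> P_gt0 XE; split=> // i j k.
by apply/esym/sum_ord_divnn_const => // d; rewrite -XE.
Qed.

Section SingleTerm.
Context {n1 n2 n3 P : nat}.
Implicit Types (W : tensor3 R P P P) (H : mat R n1 P) (Rr : mat R n2 P) (T : mat R n3 P).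

Definition factor_norms (al : R) H Rr T : R :=
  fro2 H `^ al + fro2 Rr `^ al + fro2 T `^ al.

Definition two_mode_norms (al : R) W H Rr T : R :=
  fro3 (mode3 (mode2 W Rr) T) `^ al + fro3 (mode1 (mode3 W T) H) `^ al
  + fro3 (mode2 (mode1 W H) Rr) `^ al.

Definition factor_norm_products (al : R) H Rr T : R :=
  fro2 T `^ al * fro2 Rr `^ al + fro2 T `^ al * fro2 H `^ al
  + fro2 Rr `^ al * fro2 H `^ al.

Definition one_mode_norms (al : R) W H Rr T : R :=
  fro3 (mode1 W H) `^ al + fro3 (mode2 W Rr) `^ al + fro3 (mode3 W T) `^ al.

Definition termA (l1 l4 al : R) W H Rr T : R :=
  l1 * factor_norms al H Rr T + l4 * two_mode_norms al W H Rr T.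

Definition termB (l2 l3 al : R) W H Rr T : R :=
  l2 * factor_norm_products al H Rr T + l3 * one_mode_norms al W H Rr T.

Lemma factor_norms_ge0 al H Rr T : 0 <= factor_norms al H Rr T.
Proof. by rewrite !addr_ge0 ?powR_ge0. Qed.

Lemma two_mode_norms_ge0 al W H Rr T : 0 <= two_mode_norms al W H Rr T.
Proof. by rewrite !addr_ge0 ?powR_ge0. Qed.

Lemma one_mode_norms_ge0 al W H Rr T : 0 <= one_mode_norms al W H Rr T.
Proof. by rewrite !addr_ge0 ?powR_ge0. Qed.

Lemma factor_norm_products_gt0 al H Rr T : 0 < fro2 Rr -> 0 < fro2 T ->
  0 < factor_norm_products al H Rr T.
Proof.
move=> Rr_gt0 T_gt0; rewrite /factor_norm_products -addrA.
by rewrite ltr_wpDr ?addr_ge0 ?mulr_ge0 ?powR_ge0 // mulr_gt0 ?powR_gt0.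
Qed.

Lemma termA_scale0 (l1 l4 al : R) W H Rr T : al != 0 ->
  termA l1 l4 al (scale3 0 W) H (scale2 0 Rr) (scale2 0 T) = l1 * fro2 H `^ al.
Proof.
move=> al_neq0; rewrite /termA /factor_norms /two_mode_norms !mode_scaleE.
by rewrite !fro3_scale3 !fro2_scale2 !(mul0r, normr0) powR0 // !addr0 mulr0 addr0.
Qed.

Lemma termB_scale0 (l2 l3 al : R) W H Rr T : al != 0 ->
  termB l2 l3 al (scale3 0 W) H (scale2 0 Rr) (scale2 0 T) = 0.
Proof.
move=> al_neq0; rewrite /termB /factor_norm_products /one_mode_norms !mode_scaleE.
by rewrite !fro3_scale3 !fro2_scale2 !(mul0r, normr0) powR0 // !(mul0r, mulr0, addr0).
Qed.

Lemma objA_const_slices (l1 l4 al : R) W H Rr T : (0 < P)%N ->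
  objA l1 l4 al W (const_slices H) (const_slices Rr) (const_slices T)
  = termA l1 l4 al W H Rr T.
Proof. by move=> P_gt0; apply: sum_ord_divnn_const. Qed.

Lemma objB_const_slices (l2 l3 al : R) W H Rr T : (0 < P)%N ->
  objB l2 l3 al W (const_slices H) (const_slices Rr) (const_slices T)
  = termB l2 l3 al W H Rr T.
Proof. by move=> P_gt0; apply: sum_ord_divnn_const. Qed.

End SingleTerm.

Section Rescaling.
Context {n1 n2 n3 P : nat}.
Variables (W : tensor3 R P P P) (H : mat R n1 P) (Rr : mat R n2 P) (T : mat R n3 P).

Lemma modes_rescale (t : R) : t != 0 ->
  mode3 (mode2 (mode1 (scale3 (t ^- 3) W) (scale2 t H)) (scale2 t Rr)) (scale2 t T)
  = mode3 (mode2 (mode1 W H) Rr) T.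
Proof.
move=> t_neq0; rewrite !mode_scaleE.
by rewrite [X in scale3 X _](_ : _ = 1) ?scale31 //; field.
Qed.

Lemma factor_norms_rescale (al t : R) : 0 <= t ->
  factor_norms al (scale2 t H) (scale2 t Rr) (scale2 t T)
  = t `^ al * factor_norms al H Rr T.
Proof.
move=> t_ge0; rewrite /factor_norms !fro2_scale2 ger0_norm //.
by rewrite !powRM ?fro2_ge0 // !mulrDr.
Qed.

Lemma factor_norm_products_rescale (al t : R) : 0 <= t ->
  factor_norm_products al (scale2 t H) (scale2 t Rr) (scale2 t T)
  = (t `^ al) ^+ 2 * factor_norm_products al H Rr T.
Proof.
move=> t_ge0; rewrite /factor_norm_products !fro2_scale2 ger0_norm //.
rewrite !powRM ?fro2_ge0 //; ring.
Qed.

Lemma two_mode_norms_rescale_le (al t : R) : 0 <= al -> 1 <= t ->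
  two_mode_norms al (scale3 (t ^- 3) W) (scale2 t H) (scale2 t Rr) (scale2 t T)
  <= two_mode_norms al W H Rr T.
Proof.
move=> al_ge0 t_ge1; have t_gt0 : 0 < t := lt_le_trans ltr01 t_ge1.
have t_neq0 : t != 0 by rewrite gt_eqF.
have inv_t : 0 <= t^-1 <= 1 by rewrite invr_ge0 ltW //= invf_le1.
rewrite /two_mode_norms !mode_scaleE.
have -> : t / t ^+ 3 * t = t^-1 by field.
by rewrite !lerD ?powR_fro3_scale3_le.
Qed.

End Rescaling.

Lemma linear_lt_quadratic (a1 a2 b : R) : 0 <= a1 -> 0 <= a2 -> 0 < b ->
  exists2 u, 1 <= u & u * a1 + a2 < b * u ^+ 2.
Proof.
move=> a1_ge0 a2_ge0 b_gt0; pose u := (a1 + a2) / b + 1.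
have u_ge1 : 1 <= u by rewrite /u lerDr divr_ge0 ?addr_ge0 // ltW.
exists u => //.
have -> : b * u ^+ 2 = (a1 + a2 + b) * u by rewrite /u; field; rewrite gt_eqF.
nra.
Qed.

Lemma powR_onto_ge1 {al u : R} : 0 < al -> 1 <= u -> exists2 t, 1 <= t & t `^ al = u.
Proof.
move=> al_gt0 u_ge1; exists (u `^ al^-1).
  by rewrite -(powRr0 u) ler_powR // invr_ge0 ltW.
by rewrite -powRrM mulVf ?gt_eqF // powRr1 // (le_trans ler01).
Qed.

Lemma rescaled_termA_lt_termB {l1 l2 l3 l4 al c : R} {n1 n2 n3 P : nat}
    (W : tensor3 R P P P) {H : mat R n1 P} {Rr : mat R n2 P} {T : mat R n3 P} :
  0 <= l1 -> 0 < l2 -> 0 <= l3 -> 0 <= l4 -> 0 < al -> 0 < c ->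
  0 < factor_norm_products al H Rr T ->
  exists2 t, 0 < t &
    let W' := scale3 (t ^- 3) W in
    let H' := scale2 t H in let Rr' := scale2 t Rr in let T' := scale2 t T in
    termA l1 l4 al W' H' Rr' T' < c * termB l2 l3 al W' H' Rr' T'.
Proof.
move=> l1_ge0 l2_gt0 l3_ge0 l4_ge0 al_gt0 c_gt0 prod_gt0.
set a1 := l1 * factor_norms al H Rr T.
set a2 := l4 * two_mode_norms al W H Rr T.
have [u u_ge1 u_lt] : exists2 u, 1 <= u &
    u * a1 + a2 < c * l2 * factor_norm_products al H Rr T * u ^+ 2.
  by apply: linear_lt_quadratic; rewrite ?mulr_ge0 ?mulr_gt0 ?factor_norms_ge0
    ?two_mode_norms_ge0.
have [t t_ge1 tu] := powR_onto_ge1 al_gt0 u_ge1.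
have t_ge0 : 0 <= t := le_trans ler01 t_ge1.
exists t; first exact: lt_le_trans ltr01 t_ge1.
rewrite /= /termA /termB factor_norms_rescale // factor_norm_products_rescale // tu.
apply: le_lt_trans (lt_le_trans u_lt _).
  rewrite /a1 /a2 mulrCA lerD2l ler_wpM2l //.
  exact/two_mode_norms_rescale_le/t_ge1/ltW.
have -> : c * l2 * factor_norm_products al H Rr T * u ^+ 2
    = c * (l2 * (u ^+ 2 * factor_norm_products al H Rr T)) by ring.
by rewrite ler_pM2l // lerDl mulr_ge0 ?one_mode_norms_ge0.
Qed.

Lemma decomp_objA_lt (l1 l2 l3 l4 al c : R) n1 n2 n3 (X : tensor3 R n1 n2 n3) :
  0 <= l1 -> 0 < l2 -> 0 <= l3 -> 0 <= l4 -> 0 < al -> 0 < c ->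
  (0 < n2)%N -> (0 < n3)%N ->
  exists (P D : nat) (W : tensor3 R P P P) (H : tensor3 R n1 (D %/ P) P)
         (Rr : tensor3 R n2 (D %/ P) P) (T : tensor3 R n3 (D %/ P) P),
    is_decomp X W H Rr T /\ objA l1 l4 al W H Rr T < c * objB l2 l3 al W H Rr T.
Proof.
move=> l1_ge0 l2_gt0 l3_ge0 l4_ge0 al_gt0 c_gt0 n2_gt0 n3_gt0.
pose N := (n1 + n2 + n3)%N.
have [n1N n2N n3N] : [/\ n1 <= N, n2 <= N & n3 <= N]%N by rewrite /N; split; lia.
have N_gt0 : (0 < N)%N by rewrite /N; lia.
have prod_gt0 : 0 < factor_norm_products al (@pid n1 N) (@pid n2 N) (@pid n3 N).
  by rewrite factor_norm_products_gt0 // fro2_pid // sqrtr_gt0 ltr0n.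
have [t t_gt0 /= termA_lt] := rescaled_termA_lt_termB (pad3 X N) l1_ge0 l2_gt0
  l3_ge0 l4_ge0 al_gt0 c_gt0 prod_gt0.
exists N, N, (scale3 (t ^- 3) (pad3 X N)), (const_slices (scale2 t pid)),
  (const_slices (scale2 t pid)), (const_slices (scale2 t pid)); split.
  by apply: is_decomp_const_slices; rewrite // modes_rescale ?gt_eqF ?pad3_pid_modes.
by rewrite objA_const_slices // objB_const_slices.
Qed.

Lemma decomp_objA_gt (l1 l2 l3 l4 al c : R) : 0 < l1 -> 0 < al ->
  exists (X : tensor3 R 1 1 1) (P D : nat) (W : tensor3 R P P P)
         (H : tensor3 R 1 (D %/ P) P) (Rr : tensor3 R 1 (D %/ P) P)
         (T : tensor3 R 1 (D %/ P) P),
    is_decomp X W H Rr T /\ objA l1 l4 al W H Rr T > c * objB l2 l3 al W H Rr T.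
Proof.
move=> l1_gt0 al_gt0; pose X : tensor3 R 1 1 1 := fun _ _ _ => 0.
exists X, 1%N, 1%N, (scale3 0 X), (const_slices pid),
  (const_slices (scale2 0 pid)), (const_slices (scale2 0 pid)); split.
  apply: is_decomp_const_slices; rewrite // !mode_scaleE.
  by apply: tensor3_ext => i j k; rewrite /scale3 /X !mul0r.
rewrite objA_const_slices // objB_const_slices // termA_scale0 ?termB_scale0 ?gt_eqF //.
by rewrite mulr0 mulr_gt0 ?powR_gt0 // fro2_pid // sqrtr_gt0 ltr0n.
Qed.

End Regularizers.

Theorem proposition4 (R : realType) (l1 l2 l3 l4 al : R) :
  0 < l1 -> 0 < l2 -> 0 < l3 -> 0 < l4 -> 0 < al ->
  (forall (n1 n2 n3 : nat), (0 < n1)%N -> (0 < n2)%N -> (0 < n3)%N ->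
   forall X : tensor3 R n1 n2 n3,
   exists (P D : nat) (W : tensor3 R P P P) (H : tensor3 R n1 (D %/ P) P)
          (Rr : tensor3 R n2 (D %/ P) P) (T : tensor3 R n3 (D %/ P) P),
     is_decomp X W H Rr T /\
     objA l1 l4 al W H Rr T
       < Num.sqrt (l1 * l4) / Num.sqrt (l2 * l3) * objB l2 l3 al W H Rr T)
  /\
  (exists (n1 n2 n3 : nat), [/\ (0 < n1)%N, (0 < n2)%N & (0 < n3)%N] /\
   exists X : tensor3 R n1 n2 n3,
   exists (P D : nat) (W : tensor3 R P P P) (H : tensor3 R n1 (D %/ P) P)
          (Rr : tensor3 R n2 (D %/ P) P) (T : tensor3 R n3 (D %/ P) P),
     is_decomp X W H Rr T /\
     objA l1 l4 al W H Rr T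
       > Num.sqrt (l1 * l4) / Num.sqrt (l2 * l3) * objB l2 l3 al W H Rr T).
Proof.
move=> l1_gt0 l2_gt0 l3_gt0 l4_gt0 al_gt0.
have c_gt0 : 0 < Num.sqrt (l1 * l4) / Num.sqrt (l2 * l3).
  by rewrite divr_gt0 ?sqrtr_gt0 ?mulr_gt0.
split=> [n1 n2 n3 _ n2_gt0 n3_gt0 X | ].
  by apply: decomp_objA_lt; rewrite ?ltW.
by exists 1%N, 1%N, 1%N; split=> //; apply: decomp_objA_gt.
Qed.
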